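(* For a positive integer $k$, define $f_k$ on the two-dimensional probability simplex by $f_k(x_1,x_2)=1-(2x_1-1)^{2k}$ (equivalently $1-(x_1-x_2)^{2k}$). Then $f_k\in\mathfrak{F}_{sc}$. Moreover, let $\rho=\frac12(I+\vec n\cdot\vec\sigma)$ be a qubit state with Bloch vector $\vec n=n(\sin\theta\cos\phi,\sin\theta\sin\phi,\cos\theta)$ with $0<n<1$, $0<\theta\le\pi/2$, and let $\mathfrak{D}^{(m_1)}$ and $\mathfrak{D}^{(m_2)}$ be the following pure state decompositions of $\rho$: with $\theta_3=\arccos\sqrt{1-n^2\sin^2\theta}$, $\mathfrak{D}^{(m_1)}$ consists of $\cos\frac{\theta_3}{2}|0\rangle+e^{i\phi}\sin\frac{\theta_3}{2}|1\rangle$ and $\sin\frac{\theta_3}{2}|0\rangle+e^{i\phi}\cos\frac{\theta_3}{2}|1\rangle$ with probabilities $\frac12\big(1\pm\frac{n\cos\theta}{\cos\theta_3}\big)$; with $\theta_4=\arccos\frac{1+2n\cos\theta+n^2\cos2\theta}{1+n^2+2n\cos\theta}$, $\mathfrak{D}^{(m_2)}$ consists of $|1\rangle$ with probability $\frac{1-n^2}{2(1+n\cos\theta)}$ and $\cos\frac{\theta_4}{2}|0\rangle+e^{i\phi}\sin\frac{\theta_4}{2}|1\rangle$ with probability $\frac{1+n^2+2n\cos\theta}{2(1+n\cos\theta)}$. Then there exists $K$ such that for all $k\ge K$, $\bar C_{f_k}(\mathfrak{D}^{(m_1)})>\bar C_{f_k}(\mathfrak{D}^{(m_2)})$. In particular,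 there is no single pure state decomposition of such a $\rho$ that minimizes the average coherence $\bar C_f$ simultaneously for all $f\in\mathfrak{F}_{sc}$ among the decompositions $\mathfrak{D}^{(m_1)},\mathfrak{D}^{(m_2)}$ (i.e. $\mathfrak{D}^{(m_1)}$ is not minimal for every $f$).
   Context: Reference basis $\{|0\rangle,|1\rangle\}$ of $\mathbb{C}^2$; $\vec\sigma$ are the Pauli matrices. Let $\Omega$ be the probability simplex in $\mathbb{R}^2$. $\mathfrak{F}_{sc}$ denotes the set of functions $f:\Omega\to\mathbb{R}$ such that (i) $f((1,0))=0$; (ii) $f(x_1,x_2)=f(x_2,x_1)$; (iii) $f$ is concave. For a unit vector $|\psi\rangle=\psi_0|0\rangle+\psi_1|1\rangle$, $C_f(|\psi\rangle)=f(|\psi_0|^2,|\psi_1|^2)$. A pure state decomposition of $\rho$ is a finite family $\{p_k,|\psi_k\rangle\}$ with $p_k\ge0$, $\sum_kp_k=1$, unit vectors $|\psi_k\rangle$ and $\rho=\sum_kp_k|\psi_k\rangle\langle\psi_k|$; its average coherence is $\bar C_f(\mathfrak{D})=\sum_kp_kC_f(|\psi_k\rangle)$. *)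

From HB Require Import structures.
From mathcomp Require Import all_boot all_order all_algebra.
From mathcomp Require Import all_classical all_reals.
From mathcomp Require Import trigo.
From mathcomp Require Import complex.
Set Implicit Arguments. Unset Strict Implicit. Unset Printing Implicit Defensive.
Import Order.TTheory GRing.Theory Num.Theory.
Local Open Scope ring_scope.

Section Qubit.
Variable R : realType.

Definition in_simplex (x : R * R) : Prop := 0 <= x.1 /\ 0 <= x.2 /\ x.1 + x.2 = 1.

(* the class F_sc of functions Omega -> R (represented as R*R -> R, only
   values on Omega matter) *)
Definition in_Fsc (f : R * R -> R) : Prop :=
  [/\ f (1, 0) = 0,
      (forall x, in_simplex x -> f (x.2, x.1) = f x) &
      (forall x y (t : R), in_simplex x -> in_simplex y -> 0 <= t <= 1 ->
          t * f x + (1 - t) * f y <= f (t * x.1 + (1 - t) * y.1, t * x.2 + (1 - t) * y.2))].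

Definition fk (k : nat) (x : R * R) : R := 1 - (2 * x.1 - 1) ^+ (2 * k).

Definition sqnorm (z : R[i]) : R := complex.Re z ^+ 2 + complex.Im z ^+ 2.

Definition ket (a b : R[i]) : 'cV[R[i]]_2 := \col_(j < 2) if j == 0 then a else b.
Definition comp0 (psi : 'cV[R[i]]_2) : R[i] := psi 0 0.
Definition comp1 (psi : 'cV[R[i]]_2) : R[i] := psi 1 0.

Definition is_unit_vector (psi : 'cV[R[i]]_2) : Prop :=
  sqnorm (comp0 psi) + sqnorm (comp1 psi) = 1.

Definition proj (psi : 'cV[R[i]]_2) : 'M[R[i]]_2 :=
  psi *m (map_mx (@conjc R) psi)^T.

Definition Cf (f : R * R -> R) (psi : 'cV[R[i]]_2) : R :=
  f (sqnorm (comp0 psi), sqnorm (comp1 psi)).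

Definition decomp := seq (R * 'cV[R[i]]_2).

Definition is_pure_decomposition (rho : 'M[R[i]]_2) (D : decomp) : Prop :=
  [/\ (forall d, d \in D -> 0 <= d.1),
      \sum_(d <- D) d.1 = 1,
      (forall d, d \in D -> is_unit_vector d.2) &
      rho = \sum_(d <- D) ((d.1)%:C%C *: proj d.2)].

Definition avgC (f : R * R -> R) (D : decomp) : R := \sum_(d <- D) d.1 * Cf f d.2.

Definition sigma_x : 'M[R[i]]_2 :=
  \matrix_(i < 2, j < 2) if i == j then 0 else 1.
Definition sigma_y : 'M[R[i]]_2 :=
  \matrix_(i < 2, j < 2)
    if i == j then 0 else if (i == 0) then - 'i%C else 'i%C.
Definition sigma_z : 'M[R[i]]_2 :=
  \matrix_(i < 2, j < 2) if i == j then (if i == 0 then 1 else -1) else 0.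

Definition rho_bloch (nx ny nz : R) : 'M[R[i]]_2 :=
  (1 / 2 : R)%:C%C *: (1%:M + (nx%:C%C *: sigma_x + ny%:C%C *: sigma_y + nz%:C%C *: sigma_z)).

Definition rho_state (n th ph : R) : 'M[R[i]]_2 :=
  rho_bloch (n * sin th * cos ph) (n * sin th * sin ph) (n * cos th).

Definition expi (ph : R) : R[i] := (cos ph +i* sin ph)%C.

Definition theta3 (n th : R) : R := acos (Num.sqrt (1 - n ^+ 2 * sin th ^+ 2)).
Definition theta4 (n th : R) : R :=
  acos ((1 + 2 * n * cos th + n ^+ 2 * cos (2 * th)) / (1 + n ^+ 2 + 2 * n * cos th)).

Definition Dm1 (n th ph : R) : decomp :=
  let t3 := theta3 n th in
  [:: ((1 + n * cos th / cos t3) / 2,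
        ket (cos (t3 / 2))%:C%C (expi ph * (sin (t3 / 2))%:C%C));
      ((1 - n * cos th / cos t3) / 2,
        ket (sin (t3 / 2))%:C%C (expi ph * (cos (t3 / 2))%:C%C))].

Definition Dm2 (n th ph : R) : decomp :=
  let t4 := theta4 n th in
  [:: ((1 - n ^+ 2) / (2 * (1 + n * cos th)), ket 0 1);
      ((1 + n ^+ 2 + 2 * n * cos th) / (2 * (1 + n * cos th)),
        ket (cos (t4 / 2))%:C%C (expi ph * (sin (t4 / 2))%:C%C))].

End Qubit.

From Pilot Require Import Defs.
From HB Require Import structures.
From mathcomp Require Import all_boot all_order all_algebra.
From mathcomp Require Import all_classical all_reals.
From mathcomp Require Import trigo.
From mathcomp Require Import complex.
From mathcomp Require Import topology normedtype sequences.
From mathcomp Require Import ring lra.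
Import Order.TTheory GRing.Theory Num.Theory.
Local Open Scope ring_scope.

(* Proof strategy.
   1. f_k belongs to F_sc: it vanishes at (1,0); it is symmetric on the simplex
      because 2 x_2 - 1 = -(2 x_1 - 1) there; and it is concave because
      u |-> u^(2k) = (u^2)^k is convex on R, as the composite of the convex,
      nondecreasing map u |-> u^k on [0,+oo) with the convex map u |-> u^2.
   2. A two-element family of kets a|0> + e^{i ph} b|1> with real amplitudes
      decomposes rho(n,th,ph) as soon as three real "moment" identities hold,
      and C_{f_k} of such a ket is 1 - (2a^2 - 1)^(2k).
   3. For D^(m1), cos theta3 = c3 := sqrt(1 - n^2 sin^2 th); the half-angle
      formulas yield the moment identities and an average coherence
      1 - c3^(2k).  For D^(m2), with c4 := cos theta4, the same method gives
      an average coherence q (1 - c4^(2k)) <= q, where q < 1 is the weight of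
      the second ket.
   4. As 0 <= c3^2 < 1, c3^(2k) eventually drops below 1 - q, so D^(m1) has a
      strictly larger average C_{f_k} for all large k; one such k refutes the
      minimality of D^(m1) for every f in F_sc. *)

Section PowerConvexity.
Variable R : realFieldType.

(* Jensen's inequality for two points and u |-> u^k on [0, +oo); the key
   step is the Chebyshev-type inequality (x - y) (x^k - y^k) >= 0. *)
Lemma convex_pow (k : nat) (x y t : R) : 0 <= x -> 0 <= y -> 0 <= t <= 1 ->
  (t * x + (1 - t) * y) ^+ k <= t * x ^+ k + (1 - t) * y ^+ k.
Proof.
move=> x0 y0 /andP[t0 t1]; elim: k => [|k IH]; first by rewrite !expr0; lra.
have m0 : 0 <= t * x + (1 - t) * y by apply: addr_ge0; apply: mulr_ge0 => //; lra.
have cheb : 0 <= (x - y) * (x ^+ k - y ^+ k).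
  have [xy|yx] := leP x y.
    by apply: mulr_le0; [lra | rewrite subr_le0 lerXn2r].
  by apply: mulr_ge0; [lra | rewrite subr_ge0 lerXn2r // ltW].
rewrite !exprS; apply: (le_trans (ler_wpM2l m0 IH)).
have -> : t * (x * x ^+ k) + (1 - t) * (y * y ^+ k) =
    (t * x + (1 - t) * y) * (t * x ^+ k + (1 - t) * y ^+ k) +
    t * (1 - t) * ((x - y) * (x ^+ k - y ^+ k)) by ring.
by rewrite lerDl; apply: mulr_ge0 => //; apply: mulr_ge0; lra.
Qed.

(* Even powers are convex on the whole line, since u^(2k) = (u^2)^k. *)
Lemma convex_even_pow (k : nat) (a b t : R) : 0 <= t <= 1 ->
  (t * a + (1 - t) * b) ^+ (2 * k) <= t * a ^+ (2 * k) + (1 - t) * b ^+ (2 * k).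
Proof.
move=> ht; have /andP[t0 t1] := ht; rewrite !exprM.
apply: (le_trans _ (convex_pow k _ _ _ (sqr_ge0 a) (sqr_ge0 b) ht)).
have sq_convex : (t * a + (1 - t) * b) ^+ 2 <= t * a ^+ 2 + (1 - t) * b ^+ 2.
  have -> : t * a ^+ 2 + (1 - t) * b ^+ 2 =
      (t * a + (1 - t) * b) ^+ 2 + t * (1 - t) * (a - b) ^+ 2 by ring.
  by rewrite lerDl; apply: mulr_ge0; rewrite ?sqr_ge0 //; apply: mulr_ge0; lra.
by apply: lerXn2r; rewrite ?nnegrE ?sqr_ge0 // (le_trans _ sq_convex) ?sqr_ge0.
Qed.

Lemma even_powN (x : R) (k : nat) : (- x) ^+ (2 * k) = x ^+ (2 * k).
Proof. by rewrite !exprM sqrrN. Qed.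

End PowerConvexity.

Lemma fk_in_Fsc (R : realType) (k : nat) : in_Fsc (@fk R k).
Proof.
split.
- by rewrite /fk /= mulr1 (_ : 2 - 1 = 1 :> R) ?expr1n ?subrr //; lra.
- case=> x1 x2 [/= _ [_ hsum]]; rewrite /fk /=.
  by rewrite (_ : 2 * x2 - 1 = - (2 * x1 - 1)) ?even_powN //; lra.
- case=> x1 x2 [y1 y2] t _ _ ht; rewrite /fk /=.
  have -> : 2 * (t * x1 + (1 - t) * y1) - 1 =
      t * (2 * x1 - 1) + (1 - t) * (2 * y1 - 1) by ring.
  have := @convex_even_pow _ k (2 * x1 - 1) (2 * y1 - 1) t ht; lra.
Qed.

Lemma eventually_pow_lt {R : realType} {q e : R} : 0 <= q < 1 -> 0 < e ->
  exists K : nat, forall k : nat, (K <= k)%N -> q ^+ k < e.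
Proof.
case/andP=> q0 q1 e0.
have hq : `|q| < 1 by rewrite ger0_norm.
have [K _ HK] := cvgr_lt 0 (cvg_expr hq) e e0.
by exists K => k /HK.
Qed.

Lemma half_angle {R : realType} (t : R) :
  [/\ cos (t / 2) ^+ 2 = (1 + cos t) / 2, sin (t / 2) ^+ 2 = (1 - cos t) / 2
    & cos (t / 2) * sin (t / 2) = sin t / 2].
Proof.
have hcos : cos (t / 2 + t / 2) = cos t by rewrite -splitr.
have hsin : sin (t / 2 + t / 2) = sin t by rewrite -splitr.
rewrite cosD in hcos; rewrite sinD in hsin.
have := cos2Dsin2 (t / 2); split; lra.
Qed.

Section RealAmplitudeKets.
Variable R : realType.

Lemma unit_ket (a b ph : R) : a ^+ 2 + b ^+ 2 = 1 ->
  is_unit_vector (ket a%:C%C (expi ph * b%:C%C)).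
Proof.
move=> h; rewrite /is_unit_vector /sqnorm /comp0 /comp1 /ket !mxE /= /expi /=.
by rewrite !mulr0 subr0 add0r expr0n addr0 !exprMn -mulrDl cos2Dsin2 mul1r.
Qed.

Lemma unit_ket01 : is_unit_vector (ket (0 : R[i]) 1).
Proof.
by rewrite /is_unit_vector /sqnorm /comp0 /comp1 /ket !mxE /= expr0n expr1n /= !add0r addr0.
Qed.

Lemma Cf_fk_ket (k : nat) (a b : R) (e : R[i]) :
  Cf (fk k) (ket a%:C%C (e * b%:C%C)) = 1 - (2 * a ^+ 2 - 1) ^+ (2 * k).
Proof. by rewrite /Cf /fk /sqnorm /comp0 /ket mxE /= expr0n /= addr0. Qed.

Lemma Cf_fk_ket01 (k : nat) : Cf (fk k) (ket (0 : R[i]) 1) = 0.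
Proof.
rewrite /Cf /fk /sqnorm /comp0 /ket mxE /= expr0n /= addr0 mulr0 sub0r.
by rewrite even_powN expr1n subrr.
Qed.

Lemma proj_ket01 (ph : R) :
  Defs.proj (ket (0 : R[i]) 1) = Defs.proj (ket 0%:C%C (expi ph * 1%:C%C)).
Proof.
apply/matrixP => i j; rewrite /Defs.proj !mxE /= !big_ord1 !mxE /=.
case: i => [[|[|//]] ?]; case: j => [[|[|//]] ?] /=; rewrite /expi /=; simpc => //.
apply/eqP; rewrite eq_complex /= -!expr2 cos2Dsin2 eqxx /=.
by rewrite mulrC addNr.
Qed.

Lemma rho_state_two_kets (n th ph p1 p2 a1 b1 a2 b2 : R) :
  p1 * a1 ^+ 2 + p2 * a2 ^+ 2 = (1 + n * cos th) / 2 ->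
  p1 * b1 ^+ 2 + p2 * b2 ^+ 2 = (1 - n * cos th) / 2 ->
  p1 * a1 * b1 + p2 * a2 * b2 = n * sin th / 2 ->
  rho_state n th ph = p1%:C%C *: Defs.proj (ket a1%:C%C (expi ph * b1%:C%C))
                    + p2%:C%C *: Defs.proj (ket a2%:C%C (expi ph * b2%:C%C)).
Proof.
move=> h00 h11 h01.
have hcos := congr1 ( *%R (cos ph)) h01; have hsin := congr1 ( *%R (sin ph)) h01.
have hnorm : (cos ph ^+ 2 + sin ph ^+ 2) * (p1 * b1 ^+ 2 + p2 * b2 ^+ 2) =
    (1 - n * cos th) / 2 by rewrite cos2Dsin2 mul1r.
apply/matrixP => i j; rewrite /rho_state /rho_bloch /Defs.proj !mxE.
rewrite !big_ord_recr !big_ord0 /= !add0r !mxE /=.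
case: i => [[|[|//]] ?]; case: j => [[|[|//]] ?] /=; rewrite /expi /=; simpc.
all: apply/eqP; rewrite eq_complex /=; apply/andP; split; apply/eqP.
all: rewrite /= in hcos hsin; lra.
Qed.

Lemma pure_decomposition2 (rho : 'M[R[i]]_2) (p1 p2 : R) (v1 v2 : 'cV[R[i]]_2) :
  0 <= p1 -> 0 <= p2 -> p1 + p2 = 1 -> is_unit_vector v1 -> is_unit_vector v2 ->
  rho = p1%:C%C *: Defs.proj v1 + p2%:C%C *: Defs.proj v2 ->
  is_pure_decomposition rho [:: (p1, v1); (p2, v2)].
Proof.
move=> p1_ge0 p2_ge0 hsum v1_unit v2_unit hrho.
split; try by rewrite !big_cons big_nil addr0.
- by move=> d; rewrite !inE => /orP[] /eqP ->.
- by move=> d; rewrite !inE => /orP[] /eqP ->.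
Qed.

End RealAmplitudeKets.

Section BlochDecompositions.
Variables (R : realType) (n th ph : R).
Hypotheses (hn : 0 < n < 1) (hth : 0 < th <= pi / 2).

Let n_gt0 : 0 < n. Proof. by case/andP: hn. Qed.
Let nsq_lt1 : n ^+ 2 < 1. Proof. by case/andP: hn => n0 n1; rewrite expr_lt1 // ltW. Qed.
Let sin_gt0 : 0 < sin th.
Proof. by case/andP: hth => th0 th1; apply: sin_gt0_pi; rewrite th0 /=; lra. Qed.
Let nc_ge0 : 0 <= n * cos th.
Proof.
case/andP: hth => th0 th1; apply: mulr_ge0; first exact: ltW.
by apply: cos_ge0_pihalf; rewrite th1 andbT; lra.
Qed.
Let one_plus_nc_neq0 : 1 + n * cos th != 0.
Proof. by apply: lt0r_neq0; have := nc_ge0; lra. Qed.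

Let c3 := Num.sqrt (1 - n ^+ 2 * sin th ^+ 2).

Let nsin_sq_lt1 : n ^+ 2 * sin th ^+ 2 < 1.
Proof.
have s2 : sin th ^+ 2 <= 1 by rewrite sin2cos2 gerBl sqr_ge0.
by apply: le_lt_trans nsq_lt1; rewrite ler_piMr ?sqr_ge0.
Qed.

Let c3_sq : c3 ^+ 2 = 1 - n ^+ 2 * sin th ^+ 2.
Proof. by rewrite sqr_sqrtr // subr_ge0 ltW. Qed.

Let c3_gt0 : 0 < c3.
Proof. by rewrite sqrtr_gt0 subr_gt0. Qed.

Let c3_neq0 : c3 != 0. Proof. exact: lt0r_neq0. Qed.

Let c3_in : -1 <= c3 <= 1.
Proof.
have c3_le1 : c3 ^+ 2 <= 1 by rewrite c3_sq gerBl mulr_ge0 ?sqr_ge0.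
have : c3 <= 1 by rewrite -(expr_le1 (n := 2)) // ltW.
by have := c3_gt0 => ? ?; apply/andP; split; lra.
Qed.

(* The weights of D^(m1) are nonnegative because n cos th < c3. *)
Let nc_lt_c3 : n * cos th < c3.
Proof.
have hsq : (n * cos th) ^+ 2 < c3 ^+ 2.
  rewrite -subr_gt0 c3_sq sin2cos2 (_ : _ - _ = 1 - n ^+ 2); last by ring.
  by rewrite subr_gt0.
by have := c3_gt0; have := nc_ge0; nra.
Qed.

Let cos_theta3 : cos (theta3 n th) = c3.
Proof. by rewrite /theta3 -/c3 acosK // in_itv /= c3_in. Qed.

Let sin_theta3 : sin (theta3 n th) = n * sin th.
Proof.
rewrite /theta3 -/c3 sin_acos // c3_sq opprB addrC subrK -exprMn.
by rewrite sqrtr_sqr ger0_norm // mulr_ge0 // ltW.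
Qed.

Lemma Dm1_pure : is_pure_decomposition (rho_state n th ph) (Dm1 n th ph).
Proof.
have [A2 B2 AB] := half_angle (theta3 n th).
rewrite cos_theta3 sin_theta3 in A2 B2 AB.
rewrite /Dm1 /= cos_theta3.
set A := cos (theta3 n th / 2) in A2 AB *; set B := sin (theta3 n th / 2) in B2 AB *.
apply: pure_decomposition2.
- rewrite (_ : _ / 2 = (c3 + n * cos th) / (2 * c3)); last by field.
  by apply: divr_ge0; have := c3_gt0; have := nc_ge0; lra.
- rewrite (_ : _ / 2 = (c3 - n * cos th) / (2 * c3)); last by field.
  by apply: divr_ge0; have := c3_gt0; have := nc_lt_c3; lra.
- by field.
- exact/unit_ket/cos2Dsin2.
- by apply: unit_ket; rewrite addrC cos2Dsin2.
- have cross_moment (p1 p2 : R) : p1 * A * B + p2 * B * A = (p1 + p2) * (A * B).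
    by ring.
  apply: rho_state_two_kets; last by rewrite cross_moment AB; field.
  + by rewrite A2 B2; field.
  + by rewrite A2 B2; field.
Qed.

(* Every ket of D^(m1) has C_{f_k} = 1 - c3^(2k). *)
Lemma avgC_Dm1 (k : nat) : avgC (fk k) (Dm1 n th ph) = 1 - (c3 ^+ 2) ^+ k.
Proof.
have [A2 B2 _] := half_angle (theta3 n th); rewrite cos_theta3 in A2 B2.
rewrite /avgC /Dm1 /= !big_cons big_nil !Cf_fk_ket A2 B2 cos_theta3.
rewrite (_ : 2 * ((1 + c3) / 2) - 1 = c3); last by lra.
rewrite (_ : 2 * ((1 - c3) / 2) - 1 = - c3); last by lra.
by rewrite even_powN exprM /=; field.
Qed.

Let D := 1 + n ^+ 2 + 2 * n * cos th.
Let c4 := (1 + 2 * n * cos th + n ^+ 2 * cos (2 * th)) / D.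

Let D_gt0 : 0 < D.
Proof.
rewrite /D (_ : _ + _ = (n + cos th) ^+ 2 + sin th ^+ 2).
  by apply: ltr_wpDl; [exact: sqr_ge0 | exact: exprn_gt0].
by rewrite sin2cos2; ring.
Qed.

Let D_neq0 : D != 0. Proof. exact: lt0r_neq0. Qed.

Let cos_twice : cos (2 * th) = cos th ^+ 2 - sin th ^+ 2.
Proof. by rewrite mulr2n mulrDl mul1r cosD -!expr2. Qed.

Let one_plus_c4 : 1 + c4 = 2 * (1 + n * cos th) ^+ 2 / D.
Proof. by rewrite /c4 /D cos_twice sin2cos2; field. Qed.

Let one_minus_c4 : 1 - c4 = 2 * (n * sin th) ^+ 2 / D.
Proof. by rewrite /c4 /D exprMn cos_twice sin2cos2; field. Qed.

Let c4_in : -1 <= c4 <= 1.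
Proof.
have sq_over_D (x : R) : 0 <= 2 * x ^+ 2 / D.
  by apply: divr_ge0; [rewrite mulr_ge0 ?sqr_ge0 | exact: ltW].
have := sq_over_D (1 + n * cos th); have := sq_over_D (n * sin th).
rewrite -one_plus_c4 -one_minus_c4 => h1 h2.
by apply/andP; split; lra.
Qed.

Let cos_theta4 : cos (theta4 n th) = c4.
Proof. by rewrite /theta4 acosK // in_itv /= c4_in. Qed.

Let sin_theta4 : sin (theta4 n th) = 2 * (n * sin th) * (1 + n * cos th) / D.
Proof.
rewrite /theta4 sin_acos -/D -/c4 //.
rewrite (_ : 1 - c4 ^+ 2 = (1 - c4) * (1 + c4)); last by ring.
rewrite one_minus_c4 one_plus_c4.
have -> : 2 * (n * sin th) ^+ 2 / D * (2 * (1 + n * cos th) ^+ 2 / D) =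
    (2 * (n * sin th) * (1 + n * cos th) / D) ^+ 2 by field.
rewrite sqrtr_sqr ger0_norm //; apply: divr_ge0; last exact: ltW.
by apply: mulr_ge0; [apply: mulr_ge0; rewrite ?mulr_ge0 ?ltW | have := nc_ge0; lra].
Qed.

Lemma Dm2_pure : is_pure_decomposition (rho_state n th ph) (Dm2 n th ph).
Proof.
have [A2 B2 AB] := half_angle (theta4 n th).
rewrite cos_theta4 sin_theta4 in A2 B2 AB.
rewrite /Dm2 /= -/D.
set A := cos (theta4 n th / 2) in A2 AB *; set B := sin (theta4 n th / 2) in B2 AB *.
apply: pure_decomposition2.
- by apply: divr_ge0; have := nsq_lt1; have := nc_ge0; lra.
- by apply: divr_ge0; have := D_gt0; have := nc_ge0; lra.
- by rewrite /D; field.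
- exact: unit_ket01.
- exact/unit_ket/cos2Dsin2.
- rewrite (@proj_ket01 _ ph); apply: rho_state_two_kets.
  + by rewrite expr0n mulr0 add0r A2 one_plus_c4; field; apply/andP.
  + by rewrite expr1n mulr1 B2 one_minus_c4 exprMn sin2cos2; field; apply/andP.
  + by rewrite mulr0 mul0r add0r -mulrA AB; field; apply/andP.
Qed.

(* The first ket of D^(m2) is incoherent, the second has C_{f_k} = 1 - c4^(2k). *)
Lemma avgC_Dm2 (k : nat) :
  avgC (fk k) (Dm2 n th ph) = D / (2 * (1 + n * cos th)) * (1 - (c4 ^+ 2) ^+ k).
Proof.
have [A2 _ _] := half_angle (theta4 n th); rewrite cos_theta4 in A2.
rewrite /avgC /Dm2 /= !big_cons big_nil Cf_fk_ket01 Cf_fk_ket A2 -/D.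
rewrite (_ : 2 * ((1 + c4) / 2) - 1 = c4); last by lra.
by rewrite exprM /= mulr0 add0r addr0.
Qed.

(* Since c3^2 < 1, D^(m1) eventually has the larger average C_{f_k}. *)
Lemma Dm1_eventually_beats_Dm2 : exists K : nat, forall k : nat, (K <= k)%N ->
  avgC (fk k) (Dm2 n th ph) < avgC (fk k) (Dm1 n th ph).
Proof.
set q := (1 - n ^+ 2) / (2 * (1 + n * cos th)).
have q_gt0 : 0 < q by apply: divr_gt0; have := nsq_lt1; have := nc_ge0; lra.
have c3_sq_in : 0 <= c3 ^+ 2 < 1 by rewrite sqr_ge0 c3_sq /= gtrBl mulr_gt0 ?exprn_gt0.
have [K HK] := eventually_pow_lt c3_sq_in q_gt0.
exists K => k /HK small; rewrite avgC_Dm1 avgC_Dm2.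
have wt2_ge0 : 0 <= D / (2 * (1 + n * cos th)).
  by apply: divr_ge0; have := D_gt0; have := nc_ge0; lra.
have wt2E : D / (2 * (1 + n * cos th)) = 1 - q by rewrite /q /D; field.
have := mulr_ge0 wt2_ge0 (exprn_ge0 k (sqr_ge0 c4)); rewrite wt2E; lra.
Qed.

End BlochDecompositions.

Theorem mainTheorem8 (R : realType) :
  (forall k : nat, (0 < k)%N -> in_Fsc (@fk R k)) /\
  (forall n th ph : R, 0 < n < 1 -> 0 < th <= pi / 2 ->
     [/\ is_pure_decomposition (rho_state n th ph) (Dm1 n th ph),
         is_pure_decomposition (rho_state n th ph) (Dm2 n th ph),
         (exists K : nat, forall k : nat, (0 < k)%N -> (K <= k)%N ->
            avgC (fk k) (Dm1 n th ph) > avgC (fk k) (Dm2 n th ph)) &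
         ~ (forall f : R * R -> R, in_Fsc f ->
              avgC f (Dm1 n th ph) <= avgC f (Dm2 n th ph))]).
Proof.
split=> [k _ | n th ph hn hth]; first exact: fk_in_Fsc.
have [K beats] := @Dm1_eventually_beats_Dm2 _ _ _ ph hn hth.
split; [exact: Dm1_pure | exact: Dm2_pure | by exists K => k _ /beats |].
move=> Dm1_minimal; have := beats K (leqnn K).
by rewrite ltNge Dm1_minimal //; exact: fk_in_Fsc.
Qed.
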